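(* There is an absolute constant $a>0$ such that the following holds. For any $c\ge 1$ and any $T$ with $8n<T\le \frac{n^2}{2048c^2}$, any (possibly randomized and adaptive) algorithm that, on every correlation clustering instance on $n$ vertices, outputs a clustering with expected cost at most $c\cdot\mathrm{OPT}+T$ must make at least $a\cdot\frac{n^3}{Tc^2}$ adaptive edge similarity queries, i.e. $\Omega\!\left(\frac{n^3}{Tc^2}\right)$ queries.
   Context: Correlation clustering: the input is $V=[n]$ and a complete graph on $V$ with edges labeled ``$+$'' or ``$-$''; $s(x,y)=1$ iff $\{x,y\}$ is a ``$+$'' edge. A clustering is a function $\ell:V\to\mathbb{N}$; its cost is $\sum_{\{x,y\}:\ell(x)=\ell(y)}(1-s(x,y))+\sum_{\{x,y\}:\ell(x)\neq\ell(y)}s(x,y)$, and $\mathrm{OPT}$ is the minimum cost over all clusterings of the instance. The algorithm has access to the instance only through edge similarity queries: querying a pair $(x,y)$ reveals $s(x,y)$; queries may be chosen adaptively based on previous answers. *)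

From Stdlib Require Import Reals List.
From mathcomp Require Import all_boot.

Set Implicit Arguments.
Unset Strict Implicit.
Unset Printing Implicit Defensive.

(* A correlation clustering instance on V = 'I_n: s x y = true iff {x,y} is a
   "+" edge.  The diagonal carries no information and is fixed to false. *)
Definition is_instance (n : nat) (s : 'I_n -> 'I_n -> bool) : Prop :=
  (forall x y, s x y = s y x) /\ (forall x, s x x = false).

(* A clustering is a labelling l : V -> nat.  Its cost counts, over unordered
   pairs {x,y} (x < y), the "-" edges inside clusters and the "+" edges
   between clusters. *)
Definition cc_cost (n : nat) (s : 'I_n -> 'I_n -> bool) (l : 'I_n -> nat) : nat :=
  \sum_(x < n) \sum_(y < n | x < y)
     (nat_of_bool (if l x == l y then ~~ s x y else s x y)).

Definition is_OPT (n : nat) (s : 'I_n -> 'I_n -> bool) (k : nat) : Prop :=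
  (exists l : 'I_n -> nat, cc_cost s l = k) /\
  (forall l : 'I_n -> nat, k <= cc_cost s l).

(* Deterministic adaptive query algorithm = decision tree.
   Query x y t_minus t_plus asks s(x,y) and continues with t_plus if the
   answer is "+" (true), with t_minus otherwise. *)
Inductive dtree (n : nat) : Type :=
| Leaf of ('I_n -> nat)
| Query of 'I_n & 'I_n & dtree n & dtree n.

Fixpoint run (n : nat) (s : 'I_n -> 'I_n -> bool) (t : dtree n)
  : ('I_n -> nat) * nat :=
  match t with
  | Leaf l => (l, 0)
  | Query x y t0 t1 =>
      let r := run s (if s x y then t1 else t0) in (r.1, r.2.+1)
  end.

(* A randomized adaptive algorithm: a finitely supported probability
   distribution over deterministic decision trees. *)
Definition valid_ralg (n : nat) (A : seq (R * dtree n)) : Prop :=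
  (forall p t, In (p, t) A -> Rle 0 p) /\
  fold_right (fun pt acc => Rplus (fst pt) acc) R0 A = R1.

Definition expected_cost (n : nat) (A : seq (R * dtree n))
  (s : 'I_n -> 'I_n -> bool) : R :=
  fold_right (fun pt acc =>
    Rplus (Rmult (fst pt) (INR (cc_cost s (run s (snd pt)).1))) acc) R0 A.

(* Yao's principle: it suffices to find one decision tree of the algorithm's
   support that does well on average over a random instance and still has a
   long run.  The instances are planted clusterings with OPT = 0: g * k fixed
   vertices form g blocks of k (k ~ 16 T / n, g ~ n / (2 k)) and each of the
   remaining n - g k >= n / 2 floating vertices joins a uniformly random block.
   A query through a floating vertex f is "+" in at most one placement of f, so
   it rules out at most one of the g candidate blocks, while a clustering that
   has not located f misplaces it against about k / 2 fixed vertices.  Summed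
   over f and averaged over the instances, a tree with average cost T and at
   most L queries satisfies (n - g k) k g <= 2 g T + 4 k L + (n - g k) k, hence
   L = Omega(n g) = Omega(n^3 / T). *)

From Stdlib Require Import Reals List ZArith Lra Psatz Classical.
From mathcomp Require Import all_boot zify.

Set Implicit Arguments.
Unset Strict Implicit.
Unset Printing Implicit Defensive.

Fixpoint queries_at n (f : 'I_n) (s : 'I_n -> 'I_n -> bool) (t : dtree n) : nat :=
  match t with
  | Leaf _ => 0
  | Query x y t0 t1 =>
      ((x == f) || (y == f)) + queries_at f s (if s x y then t1 else t0)
  end.

Lemma sum_queries_at n (s : 'I_n -> 'I_n -> bool) t :
  \sum_(f < n) queries_at f s t <= 2 * (run s t).2.
Proof.
elim: t => [l | x y t0 IH0 t1 IH1] /=; first by rewrite big1.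
have touch : \sum_(f < n) ((x == f) || (y == f)) <= 2.
  apply: leq_trans (_ : \sum_(f < n) ((x == f) + (y == f)) <= 2).
    by apply: leq_sum => f _; case: (x == f); case: (y == f).
  have one z : \sum_(f < n) (z == f) = 1.
    by rewrite (bigD1 z) //= eqxx big1 // => f; rewrite eq_sym => /negbTE ->.
  by rewrite big_split /= !one.
rewrite big_split /= mulnS; apply: leq_add => //.
by case: (s x y).
Qed.

(* [S j] is the instance in which the hidden vertex [f] lies in block [j], and
   [E l j] the error of the clustering [l] on it. *)
Section HiddenVertex.

Variables (n g k : nat) (f : 'I_n).
Variables (S : 'I_g -> 'I_n -> 'I_n -> bool) (E : ('I_n -> nat) -> 'I_g -> nat).
Hypothesis S_off : forall j j' x y, x != f -> y != f -> S j x y = S j' x y.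
Hypothesis S_at_inj :
  forall j j' x y, (x == f) || (y == f) -> S j x y -> S j' x y -> j = j'.
Hypothesis E_pair : forall l j j', j != j' -> k <= E l j + E l j'.

(* Pair every candidate with the one of least error. *)
Lemma leaf_error_bound l (W : {set 'I_g}) : k * #|W| <= 2 * \sum_(j in W) E l j + k.
Proof.
have [-> | [j0 j0W]] := set_0Vmem W; first by rewrite cards0 muln0.
case: (arg_minnP (E l) j0W) => jm jmW jm_min.
rewrite mulnC -sum_nat_const (bigD1 jm) //= addnC leq_add2r.
rewrite [X in _ <= 2 * X](bigD1 jm) //= mulnDr big_distrr /=.
apply: leq_trans (leq_addl _ _); apply: leq_sum => j /andP [jW jjm].
by apply: leq_trans (E_pair l jjm) _; rewrite mul2n -addnn leq_add2l jm_min.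
Qed.

Definition hidden_tradeoff (t : dtree n) (W : {set 'I_g}) : Prop :=
  k * #|W| ^ 2 <= 2 * #|W| * \sum_(j in W) E (run (S j) t).1 j
                  + 2 * k * \sum_(j in W) queries_at f (S j) t + k * #|W|.

Lemma hidden_tradeoff_follow x y t0 t1 (W : {set 'I_g}) b :
  (forall j, j \in W -> S j x y = b) ->
  hidden_tradeoff (if b then t1 else t0) W -> hidden_tradeoff (Query x y t0 t1) W.
Proof.
move=> Sb; rewrite /hidden_tradeoff => /leq_trans; apply.
rewrite leq_add2r; apply: leq_add; apply: leq_mul => //.
  by apply: eq_leq; apply: eq_bigr => j jW /=; rewrite Sb.
by apply: leq_sum => j jW /=; rewrite Sb // leq_addl.
Qed.

Lemma hidden_tradeoff_hit x y t0 t1 (W : {set 'I_g}) j1 :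
  (x == f) || (y == f) -> j1 \in W -> S j1 x y ->
  hidden_tradeoff t0 (W :\ j1) -> hidden_tradeoff (Query x y t0 t1) W.
Proof.
move=> touch j1W Sj1.
have miss j : j \in W :\ j1 -> S j x y = false.
  rewrite in_setD1 => /andP [jj1 _]; apply/negP => Sj.
  by rewrite (S_at_inj touch Sj Sj1) eqxx in jj1.
rewrite /hidden_tradeoff (cardsD1 j1 W) j1W !(big_setD1 j1 j1W) /= touch => IH.
rewrite (eq_bigr (fun j => E (run (S j) t0).1 j)) => [|j /miss /= ->] //.
(* every remaining candidate paid one query through [f] to split off [j1] *)
rewrite [\sum_(j in _) (_ + _)](eq_bigr (fun j => 1 + queries_at f (S j) t0));
  last by move=> j /miss /= ->.
rewrite big_split /= sum1_card; move: IH.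
set w := #|W :\ j1|; set e := \sum_(j in _) _; set q := \sum_(j in _) queries_at _ _ _.
nia.
Qed.

Lemma hidden_tradeoff_all t (W : {set 'I_g}) : hidden_tradeoff t W.
Proof.
elim: t W => [l | x y t0 IH0 t1 IH1] W.
  have := leaf_error_bound l W; rewrite /hidden_tradeoff /= big1_eq.
  set w := #|W|; set e := \sum_(j in W) _; nia.
have [j1 /andP [j1W Sj1] | miss] := pickP (fun j => (j \in W) && S j x y).
  have [touch | /norP [xf yf]] := boolP ((x == f) || (y == f)).
    exact: hidden_tradeoff_hit touch j1W Sj1 (IH0 _).
  by apply: (hidden_tradeoff_follow (b := true)) (IH1 W) => j _; rewrite (S_off j j1).
apply: (hidden_tradeoff_follow (b := false)) (IH0 W) => j jW.
by have := miss j; rewrite /= jW.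
Qed.

End HiddenVertex.

Section FunUpdate.

Variables (T U : finType).
Implicit Types (h : {ffun T -> U}) (x : T) (u v : U).

Definition fupd h x u : {ffun T -> U} := [ffun y => if y == x then u else h y].

Lemma fupdE h x u y : fupd h x u y = if y == x then u else h y.
Proof. by rewrite ffunE. Qed.

Lemma fupd_fupd h x u v : fupd (fupd h x u) x v = fupd h x v.
Proof. by apply/ffunP => y; rewrite !fupdE; case: eqP. Qed.

Lemma fupd_eq h x u : (fupd h x u == h) = (h x == u).
Proof.
apply/eqP/eqP => [<- | <-]; first by rewrite fupdE eqxx.
by apply/ffunP => y; rewrite fupdE; case: eqP => [-> |].
Qed.

Lemma sum_fupd_fiber (G : {ffun T -> U} -> nat) x u v :
  \sum_(h : {ffun T -> U} | h x == v) G (fupd h x u)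
  = \sum_(h : {ffun T -> U} | h x == u) G h.
Proof.
rewrite [RHS](reindex_onto (fun h => fupd h x u) (fun h => fupd h x v)); last first.
  by move=> h /eqP <-; rewrite fupd_fupd; apply/eqP; rewrite fupd_eq.
by symmetry; apply: eq_bigl => h; rewrite fupdE !eqxx fupd_fupd fupd_eq.
Qed.

Lemma sum_fupd (G : {ffun T -> U} -> nat) x :
  \sum_h \sum_u G (fupd h x u) = #|U| * \sum_h G h.
Proof.
rewrite exchange_big [in RHS](partition_big (fun h => h x) xpredT) // big_distrr /=.
apply: eq_bigr => u _; rewrite (partition_big (fun h => h x) xpredT) //=.
under eq_bigr do rewrite sum_fupd_fiber.
by rewrite sum_nat_const.
Qed.

End FunUpdate.

Lemma leq_sum_pred (I : finType) (P Q : pred I) (F : I -> nat) :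
  (forall i, P i -> Q i) -> \sum_(i | P i) F i <= \sum_(i | Q i) F i.
Proof. by move=> PQ; apply: (sub_le_big leqnn (fun a b => leq_addr b a)). Qed.

Definition disagree n (s : 'I_n -> 'I_n -> bool) (l : 'I_n -> nat) (x y : 'I_n) : bool :=
  if l x == l y then ~~ s x y else s x y.

Lemma cc_cost_ge_rect n (s : 'I_n -> 'I_n -> bool) l (P Q : pred 'I_n) :
  (forall x y, P x -> Q y -> x < y) ->
  \sum_(y | Q y) \sum_(x | P x) disagree s l x y <= cc_cost s l.
Proof.
move=> PQ; rewrite exchange_big /=.
apply: (@leq_trans (\sum_(x | P x) \sum_(y < n | x < y) disagree s l x y)).
  by apply: leq_sum => x Px; apply: leq_sum_pred => y; apply: PQ.
exact: leq_sum_pred.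
Qed.

Section Planted.

Variables (n k g : nat).
Implicit Types (h : {ffun 'I_n -> 'I_g}) (f x y : 'I_n).

Definition block h x : nat := if x < g * k then x %/ k else h x.

Definition planted h x y : bool := (x != y) && (block h x == block h y).

Lemma planted_sym h x y : planted h x y = planted h y x.
Proof. by rewrite /planted eq_sym [block h y == _]eq_sym. Qed.

Lemma planted_instance h : is_instance (planted h).
Proof. by split=> [x y | x]; [apply: planted_sym | rewrite /planted eqxx]. Qed.

Lemma planted_OPT h : is_OPT (planted h) 0.
Proof.
split=> // ; exists (block h).
rewrite /cc_cost big1 // => x _; rewrite big1 // => y xy.
have xy' : x != y by rewrite neq_ltn xy.
by rewrite /planted xy' /=; case: eqP.
Qed.

Lemma block_fupd h f j x : g * k <= f ->
  block (fupd h f j) x = if x == f then val j else block h x.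
Proof.
by move=> gkf; rewrite /block fupdE; case: eqP => [-> | //]; rewrite ltnNge gkf.
Qed.

Lemma planted_fupd_off h f (gkf : g * k <= f) j j' x y : x != f -> y != f ->
  planted (fupd h f j) x y = planted (fupd h f j') x y.
Proof. by move=> xf yf; rewrite /planted !block_fupd // (negbTE xf) (negbTE yf). Qed.

Lemma planted_fupd_at h f j y : g * k <= f ->
  planted (fupd h f j) f y = (f != y) && (val j == block h y).
Proof.
move=> gkf; rewrite /planted !block_fupd // eqxx.
by case: (eqVneq y f) => [-> | yf]; rewrite ?eqxx.
Qed.

Lemma planted_fupd_at_inj h f (gkf : g * k <= f) j j' x y : (x == f) || (y == f) ->
  planted (fupd h f j) x y -> planted (fupd h f j') x y -> j = j'.
Proof.
move=> touch.
have at_f z : planted (fupd h f j) f z -> planted (fupd h f j') f z -> j = j'.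
  rewrite !planted_fupd_at // => /andP [_ /eqP jz] /andP [_ /eqP j'z].
  by apply: val_inj; rewrite /= jz j'z.
case/orP: touch => /eqP ->; first exact: at_f.
by rewrite ![planted _ x f]planted_sym; apply: at_f.
Qed.

Lemma planted_fupd_fixed h f j (a : 'I_n) : g * k <= f -> a < g * k ->
  planted (fupd h f j) a f = (a %/ k == j).
Proof.
move=> gkf agk; rewrite planted_sym planted_fupd_at // /block agk.
by rewrite neq_ltn (leq_trans agk gkf) orbT eq_sym.
Qed.

Hypothesis gkn : g * k <= n.

Lemma fixed_block_count j : j < g -> k <= \sum_(a < n | a < g * k) (a %/ k == j).
Proof.
move=> jg; rewrite (big_ord_narrow gkn) /=.
rewrite -(big_mkord xpredT (fun a => (a %/ k == j) : nat)) big_nat_mul big_mkord.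
rewrite (bigD1 (Ordinal jg)) //= (eq_big_nat _ _ (F2 := fun => 1)).
  by rewrite sum_nat_const_nat mulSn addnK muln1 leq_addr.
move=> a /andP [lo hi]; have k0 : 0 < k by lia.
by rewrite eqn_leq -ltnS ltn_divLR // leq_divRL // lo hi.
Qed.

Lemma planted_error_pair h f (gkf : g * k <= f) l (j j' : 'I_g) :
  j != j' ->
  k <= \sum_(a < n | a < g * k) disagree (planted (fupd h f j)) l a f
       + \sum_(a < n | a < g * k) disagree (planted (fupd h f j')) l a f.
Proof.
move=> jj'; apply: leq_trans (fixed_block_count (ltn_ord j)) _.
rewrite -big_split /=; apply: leq_sum => a agk.
rewrite /disagree !planted_fupd_fixed //.
have [-> | //] := eqVneq (a %/ k) j.
by have /negbTE -> : (j : nat) != j' by []; case: (l a == l f).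
Qed.

(* The share of the floating vertex [f] in [2 g * cost + 4 k * queries]. *)
Definition charge (t : dtree n) f h : nat :=
  2 * g * \sum_(a < n | a < g * k) disagree (planted h) (run (planted h) t).1 a f
  + 2 * k * queries_at f (planted h) t.

Lemma charge_fupd_bound t h f : g * k <= f ->
  k * g ^ 2 <= \sum_(j : 'I_g) charge t f (fupd h f j) + k * g.
Proof.
move=> gkf.
have := hidden_tradeoff_all (planted_fupd_off h gkf)
  (planted_fupd_at_inj (h := h) gkf) (planted_error_pair h gkf) t [set: 'I_g].
rewrite /hidden_tradeoff cardsT card_ord /charge big_split -!big_distrr /=.
by rewrite !(eq_bigl _ _ (@in_setT 'I_g)).
Qed.

Lemma charge_average t f : 0 < g -> g * k <= f ->
  k * g * #|{ffun 'I_n -> 'I_g}| <= \sum_h charge t f h + k * #|{ffun 'I_n -> 'I_g}|.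
Proof.
move=> g0 gkf; rewrite -(leq_pmul2l g0) mulnDr.
have : \sum_(h : {ffun 'I_n -> 'I_g}) k * g ^ 2
       <= \sum_h (\sum_(j : 'I_g) charge t f (fupd h f j) + k * g).
  by apply: leq_sum => h _; apply: charge_fupd_bound.
rewrite big_split /= sum_fupd card_ord !sum_nat_const.
set N := #|_|; set C := \sum_h _; nia.
Qed.

Lemma planted_tradeoff t : 0 < g ->
  (n - g * k) * (k * g * #|{ffun 'I_n -> 'I_g}|)
  <= 2 * g * \sum_h cc_cost (planted h) (run (planted h) t).1
     + 4 * k * \sum_h (run (planted h) t).2
     + (n - g * k) * (k * #|{ffun 'I_n -> 'I_g}|).
Proof.
move=> g0.
have floating c : \sum_(f < n | g * k <= f) c = (n - g * k) * c.
  by rewrite -sum_nat_const_nat big_geq_mkord.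
rewrite -!floating; apply: (@leq_trans (\sum_(f < n | g * k <= f)
  (\sum_h charge t f h + k * #|{ffun 'I_n -> 'I_g}|))).
  by apply: leq_sum => f gkf; apply: charge_average.
rewrite big_split /= leq_add2r exchange_big /= !big_distrr -big_split /=.
apply: leq_sum => h _; rewrite /charge big_split -!big_distrr /=.
apply: leq_add.
  rewrite leq_mul2l; apply/orP; right; apply: cc_cost_ge_rect => a f agk gkf.
  exact: leq_trans agk gkf.
have : \sum_(f < n | g * k <= f) queries_at f (planted h) t <= 2 * (run (planted h) t).2.
  by apply: leq_trans (sum_queries_at _ _); apply: leq_sum_pred.
set qs := \sum_(f < n | _) _; set q := (run _ t).2; nia.
Qed.

End Planted.

Local Open Scope R_scope.

Section WeightedSums.

Variable B : Type.
Implicit Types (A : seq (R * B)) (X : B -> R).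

(* By conversion, [valid_ralg A] says [weight A = 1] and [expected_cost A s] is
   [wsum A (fun t => INR (cc_cost s (run s t).1))]. *)
Definition weight A : R := fold_right (fun pt acc => Rplus (fst pt) acc) R0 A.

Definition wsum A X : R :=
  fold_right (fun pt acc => Rplus (Rmult (fst pt) (X (snd pt))) acc) R0 A.

Lemma wsum_sum_le (I : finType) A (C : I -> B -> nat) M :
  (forall i, wsum A (fun b => INR (C i b)) <= M) ->
  wsum A (fun b => INR (\sum_i C i b)) <= INR #|I| * M.
Proof.
have wsum_nil : wsum A (fun b => INR (\sum_(i <- [::]) C i b)) = 0.
  by elim: A => [|[p b] A IHA] //=; rewrite IHA big_nil /=; ring.
have wsum_cons i s : wsum A (fun b => INR (\sum_(j <- i :: s) C j b))
    = wsum A (fun b => INR (C i b)) + wsum A (fun b => INR (\sum_(j <- s) C j b)).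
  by elim: A {wsum_nil} => [|[p b] A IHA] /=; rewrite ?IHA ?big_cons ?plus_INR; ring.
have -> : #|I| = size (index_enum I) by rewrite -sum1_size -sum1_card.
elim: (index_enum I) => [|i s IH] CM; first by rewrite wsum_nil /=; lra.
by rewrite wsum_cons (S_INR (size s)); have := CM i; have := IH CM; lra.
Qed.

Lemma exists_support_le A X Y : (forall p b, In (p, b) A -> 0 <= p) ->
  0 < weight A -> wsum A X <= Y * weight A ->
  exists p b, In (p, b) A /\ 0 < p /\ X b <= Y.
Proof.
move=> A_ge0 wA wle; apply: NNPP => none.
have above p b : In (p, b) A -> 0 < p -> Y < X b.
  move=> pbA p0; apply: Rnot_le_lt => XY; apply: none; exists p, b; split => //.
suff [_ /(_ wA)] : Y * weight A <= wsum A X /\ (0 < weight A -> Y * weight A < wsum A X).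
  lra.
elim: A {wA wle none} A_ge0 above => [|[p b] A IH] A_ge0 above.
  rewrite /weight /=; lra.
have [IHle IHlt] := IH (fun q c qcA => A_ge0 q c (or_intror qcA))
  (fun q c qcA => above q c (or_intror qcA)).
have p0 := A_ge0 p b (or_introl erefl).
rewrite /weight /wsum /= -/(weight A) -/(wsum A X).
have [p_pos | p_zero] := Rle_lt_or_eq_dec 0 p p0.
  have := above p b (or_introl erefl) p_pos; split; nra.
rewrite -p_zero; split; lra.
Qed.

End WeightedSums.

Lemma exists_tree_sum_cost_le n (I : finType) (A : seq (R * dtree n))
    (s : I -> 'I_n -> 'I_n -> bool) T :
  valid_ralg A -> (forall i, expected_cost A (s i) <= T) ->
  exists p t, In (p, t) A /\ 0 < p /\
    INR (\sum_i cc_cost (s i) (run (s i) t).1) <= INR #|I| * T.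
Proof.
case=> A_ge0 wA1 cost_le; apply: exists_support_le A_ge0 _ _.
  by rewrite /weight wA1; lra.
by rewrite /weight wA1 Rmult_1_r; apply: wsum_sum_le.
Qed.

Lemma block_parameters n T : 8 * INR n < T -> 2048 * T <= INR n ^ 2 ->
  exists k g : nat, [/\ (0 < k)%N, (0 < g)%N, (g * k * 2 <= n)%N,
    16 * T < INR k * INR n & INR n ^ 2 < 34 * T * (INR g + 1)].
Proof.
move=> nT Tn; have n_pos : 0 < INR n by have := pos_INR n; nra.
have [up_gt up_le] := archimed (16 * T / INR n).
have up_pos : (0 < up (16 * T / INR n))%Z.
  by apply: lt_0_IZR; apply: Rlt_trans up_gt; apply: Rdiv_lt_0_compat; lra.
pose k := Z.to_nat (up (16 * T / INR n)).
have kE : INR k = IZR (up (16 * T / INR n)) by rewrite INR_IZR_INZ Z2Nat.id //; lia.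
have div_n : 16 * T / INR n * INR n = 16 * T by field; lra.
have kn_gt : 16 * T < INR k * INR n.
  by rewrite kE -{1}div_n; apply: Rmult_lt_compat_r.
have kn_le : INR k * INR n <= 16 * T + INR n.
  have := Rmult_le_compat_r (INR n) _ _ (Rlt_le _ _ n_pos) up_le.
  by rewrite kE; lra.
have k0 : (0 < k)%N by apply/ltP/INR_lt; change (INR 0) with 0; nra.
pose g := (n %/ (k * 2))%N.
have k2 : (0 < k * 2)%N by rewrite muln_gt0 k0.
have n_lt : INR n < INR k * 2 * (INR g + 1).
  have /ltP/lt_INR := ltn_ceil n k2.
  by rewrite mult_INR S_INR mult_INR -/g /=; lra.
have g_ge0 := pos_INR g.
have n2_lt : INR n ^ 2 < 34 * T * (INR g + 1).
  by have := Rmult_lt_compat_l (INR n) _ _ n_pos n_lt; nra.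
exists k, g; split => //.
  case: (posnP g) => [g0 | //]; have : INR g = 0 by rewrite g0.
  nra.
by rewrite -mulnA leq_divM.
Qed.

Lemma tradeoff_arith (n T c k g L : R) : 1 <= c -> 0 <= n -> 0 <= g -> 0 <= L ->
  2048 * T <= n ^ 2 -> 16 * T < k * n -> n ^ 2 < 34 * T * (g + 1) -> g * k * 2 <= n ->
  (n - g * k) * k * g <= 2 * g * T + 4 * k * L + (n - g * k) * k ->
  1 / 1088 * (n ^ 3 / (T * c ^ 2)) <= L.
Proof.
move=> c1 n0 g0 L0 Tn kn ng gkn trade.
have T_pos : 0 < T by nra.
have n_pos : 0 < n by nra.
have k_pos : 0 < k by nra.
have mk : 8 * T < (n - g * k) * k by nra.
have g4 : 4 <= g by nra.
have mg : (n - g * k) * g <= 8 * L by apply: (Rmult_le_reg_l k) => //; nra.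
have ng68 : n ^ 2 < 68 * T * g by nra.
have n3 : n ^ 3 <= 1088 * T * L by nra.
have [c2 TL] : 1 <= c ^ 2 /\ 0 <= T * L by split; nra.
apply: (Rmult_le_reg_r (1088 * T * c ^ 2)); first nra.
have -> : 1 / 1088 * (n ^ 3 / (T * c ^ 2)) * (1088 * T * c ^ 2) = n ^ 3.
  by field; split; lra.
nra.
Qed.

Lemma planted_query_tradeoff n k g (t : dtree n) T L : (0 < g)%N -> (g * k <= n)%N ->
  INR (\sum_(h : {ffun 'I_n -> 'I_g}) cc_cost (planted k h) (run (planted k h) t).1)
    <= INR #|{ffun 'I_n -> 'I_g}| * T ->
  (forall h : {ffun 'I_n -> 'I_g}, (run (planted k h) t).2 <= L)%N ->
  (INR n - INR g * INR k) * INR k * INR g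
    <= 2 * INR g * T + 4 * INR k * INR L + (INR n - INR g * INR k) * INR k.
Proof.
move=> g0 gkn cost_le q_le.
have N_pos : 0 < INR #|{ffun 'I_n -> 'I_g}|.
  by apply/lt_0_INR/ltP; rewrite card_ffun card_ord expn_gt0 g0.
have := le_INR _ _ (elimT leP (planted_tradeoff gkn t g0)).
rewrite !plus_INR !mult_INR minus_INR ?mult_INR; last exact/leP.
have q_sum : (\sum_(h : {ffun 'I_n -> 'I_g}) (run (planted k h) t).2
              <= #|{ffun 'I_n -> 'I_g}| * L)%N.
  by rewrite -sum_nat_const; apply: leq_sum => h _.
have := le_INR _ _ (elimT leP q_sum); rewrite mult_INR.
rewrite (INR_IZR_INZ 2) (INR_IZR_INZ 4) /=.
move=> /(Rmult_le_compat_l _ _ _ (pos_INR k)) Q_le trade.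
have := Rmult_le_compat_l _ _ _ (pos_INR g) cost_le.
move=> C_le; apply: (Rmult_le_reg_r _ _ _ N_pos).
set N := INR #|_| in N_pos Q_le trade C_le *.
set C := INR (\sum_h cc_cost _ _) in trade C_le *.
set Q := INR (\sum_h (run _ t).2) in Q_le trade *.
lra.
Qed.

Theorem theorem4p1 :
  exists a : R, (0 < a) /\
  forall (n : nat) (c T : R) (A : seq (R * dtree n)),
    (1 <= c) ->
    (8 * INR n < T) ->
    (T <= INR n ^ 2 / (2048 * c ^ 2)) ->
    valid_ralg A ->
    (forall s : 'I_n -> 'I_n -> bool, is_instance s ->
       forall k : nat, is_OPT s k ->
       (expected_cost A s <= c * INR k + T)) ->
    exists s : 'I_n -> 'I_n -> bool, is_instance s /\
      exists (p : R) (t : dtree n), In (p, t) A /\ (0 < p) /\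
        (a * (INR n ^ 3 / (T * c ^ 2)) <= INR (run s t).2).
Proof.
exists (1 / 1088); split; first lra.
move=> n c T A c1 nT T_le algA cost_le.
have n_ge0 := pos_INR n.
have Tn : 2048 * T <= INR n ^ 2.
  have c2 : 1 <= c ^ 2 by nra.
  have c2_pos : 0 < 2048 * c ^ 2 by lra.
  have := Rmult_le_compat_r _ _ _ (Rlt_le _ _ c2_pos) T_le.
  by rewrite /Rdiv Rmult_assoc Rinv_l; nra.
have [k [g [k0 g0 gkn kn ng]]] := block_parameters nT Tn.
have cost_T (h : {ffun 'I_n -> 'I_g}) : expected_cost A (planted k h) <= T.
  have := cost_le _ (planted_instance k h) _ (planted_OPT k h).
  by rewrite /= Rmult_0_r Rplus_0_l.
have [p [t [tA [p0 avg]]]] := exists_tree_sum_cost_le algA cost_T.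
have [hmax _ q_max] :=
  @arg_maxnP _ [ffun => Ordinal g0] xpredT (fun h => (run (planted k h) t).2) isT.
exists (planted k hmax); split; first exact: planted_instance.
exists p, t; do 3?split => //.
have gk_n : (g * k <= n)%N by apply: leq_trans gkn; apply: leq_pmulr.
have trade := planted_query_tradeoff g0 gk_n avg (fun h => q_max h isT).
have /le_INR gkn_R := elimT leP gkn; rewrite !mult_INR in gkn_R.
exact: tradeoff_arith c1 n_ge0 (pos_INR g) (pos_INR _) Tn kn ng gkn_R trade.
Qed.
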